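(* Let $\mathcal X\subseteq\Delta_d$ be convex, let $\ell_1,\dots,\ell_T\in[0,1]^d$, and let $R:\mathcal X\to\mathbb R$ be a regularizer that is $1$-strongly convex with respect to a norm $\|\cdot\|$, with dual norm $\|\cdot\|_*$. Run optimistic online mirror descent (OOMD) with learning rate $\eta>0$ on the losses $\ell_t$. Then for any $x^\star\in\mathcal X$ and any nonnegative weights $q_1,\dots,q_{T+1}$, $$\sum_{t=1}^Tq_t\langle x_t-x^\star,\ell_t\rangle\le\frac{q_1D_R(x^\star,\tilde x_0)}{\eta}+\frac1\eta\sum_{t=1}^T(q_{t+1}-q_t)D_R(x^\star,\tilde x_t)+\frac\eta2\sum_{t=1}^Tq_t\|\ell_t-\tilde\ell_t\|_*^2.$$
   Context: OOMD: $\tilde x_0=\arg\min_{x\in\mathcal X}R(x)$; for $t=1,\dots,T$: $x_t=\arg\min_{x\in\mathcal X}\{\langle\tilde\ell_t,x\rangle+\frac1\eta D_R(x,\tilde x_{t-1})\}$ and $\tilde x_t=\arg\min_{x\in\mathcal X}\{\langle\ell_t,x\rangle+\frac1\eta D_R(x,\tilde x_{t-1})\}$, where $\tilde\ell_1=0$ and $\tilde\ell_t=\ell_{t-1}$ for $t\ge2$. $D_R(x,y)=R(x)-R(y)-\langle\nabla R(y),x-y\rangle$ is the Bregman divergence. *)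

From HB Require Import structures.
From mathcomp Require Import all_boot all_order all_algebra.
From mathcomp Require Import all_classical all_reals all_analysis.
Set Implicit Arguments. Unset Strict Implicit. Unset Printing Implicit Defensive.
Import Order.TTheory GRing.Theory Num.Theory.
Import numFieldNormedType.Exports.
Local Open Scope classical_set_scope.
Local Open Scope ring_scope.

Section Defs.
Variables (R : realType) (d : nat).
Notation vec := 'rV[R]_d.

Definition ip (a b : vec) : R := \sum_(i < d) a 0 i * b 0 i.

Definition simplex : set vec :=
  [set x | (forall i, 0 <= x 0 i) /\ \sum_(i < d) x 0 i = 1].

Definition is_norm (N : vec -> R) : Prop :=
  (forall x, 0 <= N x) /\ (forall x, N x = 0 -> x = 0) /\
  (forall (a : R) x, N (a *: x) = `|a| * N x) /\
  (forall x y, N (x + y) <= N x + N y).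

Definition dual_norm (N : vec -> R) (z : vec) : R :=
  sup [set ip z x | x in [set x | N x <= 1]].

Definition strongly_convex1 (N : vec -> R) (X : set vec) (Rg : vec -> R) : Prop :=
  forall x y (lam : R), X x -> X y -> 0 <= lam <= 1 ->
    Rg (lam *: x + (1 - lam) *: y) <=
      lam * Rg x + (1 - lam) * Rg y - lam * (1 - lam) / 2 * N (x - y) ^+ 2.

Definition grad (Rg : vec -> R) (y : vec) : vec :=
  \row_(i < d) ('D_(delta_mx 0 i) Rg y).

Definition bregman (Rg : vec -> R) (x y : vec) : R :=
  Rg x - Rg y - ip (grad Rg y) (x - y).

Definition ltilde (l : nat -> vec) (t : nat) : vec :=
  if (t <= 1)%N then 0 else l t.-1.

Definition omd_step (X : set vec) (Rg : vec -> R) (eta : R)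
  (g prev y : vec) : Prop :=
  X y /\ forall z, X z ->
    ip g y + bregman Rg y prev / eta <= ip g z + bregman Rg z prev / eta.

Definition is_OOMD (X : set vec) (Rg : vec -> R) (eta : R) (T : nat)
  (l : nat -> vec) (x xt : nat -> vec) : Prop :=
  (X (xt 0%N) /\ forall z, X z -> Rg (xt 0%N) <= Rg z) /\
  forall t, (1 <= t <= T)%N ->
    omd_step X Rg eta (ltilde l t) (xt t.-1) (x t) /\
    omd_step X Rg eta (l t) (xt t.-1) (xt t).

End Defs.

(* Each OOMD step minimises a linear function plus a Bregman divergence over a
   convex set, so its first-order optimality condition (obtained from one-sided
   difference quotients along segments of X) gives the three-point inequality
     eta <g, y - z> <= D(z, p) - D(z, y) - D(y, p).
   Applied to x_t (tested against xtilde_t) and to xtilde_t (tested against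
   xs), it yields
     eta <x_t - xs, l_t> <= D(xs, xtilde_{t-1}) - D(xs, xtilde_t)
                            - D(xtilde_t, x_t) + eta <l_t - ltilde_t, x_t - xtilde_t>.
   Strong convexity gives D(a, b) >= ||a - b||^2 / 2, and the last term is at
   most ||x_t - xtilde_t|| ||l_t - ltilde_t||_* <= ||x_t - xtilde_t||^2 / 2
   + eta^2 ||l_t - ltilde_t||_*^2 / 2.  Weighting round t by q_t and summing
   by parts produces the (q_{t+1} - q_t) terms, up to the nonpositive
   boundary term -q_{T+1} D(xs, xtilde_T).
   Hoelder's inequality <z, v> <= ||v|| ||z||_* requires the supremum defining
   ||z||_* to be over a bounded set; this follows from the equivalence of any
   norm on R^d with the sup norm, by compactness of the unit sphere. *)
From HB Require Import structures.
From mathcomp Require Import all_boot all_order all_algebra.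
From mathcomp Require Import all_classical all_reals all_analysis.
From mathcomp Require Import lra ring.
Import Order.TTheory GRing.Theory Num.Theory.
Import numFieldNormedType.Exports.
Local Open Scope classical_set_scope.
Local Open Scope ring_scope.

Section InnerProduct.
Context {R : realType} {d : nat}.
Implicit Types x y z : 'rV[R]_d.

Lemma ipC x y : ip x y = ip y x.
Proof. by apply: eq_bigr => i _; rewrite mulrC. Qed.

Lemma ipDr x y z : ip x (y + z) = ip x y + ip x z.
Proof. by rewrite /ip -big_split; apply: eq_bigr => i _; rewrite mxE mulrDr. Qed.

Lemma ipZr x k y : ip x (k *: y) = k * ip x y.
Proof. by rewrite /ip mulr_sumr; apply: eq_bigr => i _; rewrite mxE mulrCA. Qed.

Lemma ip0r x : ip x 0 = 0.
Proof. by rewrite -(scale0r 0) ipZr mul0r. Qed.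

Lemma ipNr x y : ip x (- y) = - ip x y.
Proof. by rewrite -scaleN1r ipZr mulN1r. Qed.

Lemma ipBr x y z : ip x (y - z) = ip x y - ip x z.
Proof. by rewrite ipDr ipNr. Qed.

Lemma ipBl x y z : ip (y - z) x = ip y x - ip z x.
Proof. by rewrite ipC ipBr !(ipC x). Qed.

Lemma ip_grad_derive (f : 'rV[R]_d -> R) y v :
  differentiable f y -> ip (grad f y) v = 'D_v f y.
Proof.
move=> df; rewrite deriveE // {2}(row_sum_delta v) linear_sum.
by apply: eq_bigr => i _; rewrite linearZ /= mxE deriveE // mulrC.
Qed.

End InnerProduct.

Section NormsOnRowVectors.
Context {R : realType} {d : nat} {N : 'rV[R]_d -> R}.
Hypothesis normN : is_norm N.
Implicit Types x y z : 'rV[R]_d.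

Lemma isnorm_ge0 x : 0 <= N x.
Proof. by case: normN. Qed.

Lemma isnorm_eq0 x : N x = 0 -> x = 0.
Proof. by case: normN => _ [/(_ x)]. Qed.

Lemma isnormZ k x : N (k *: x) = `|k| * N x.
Proof. by case: normN => _ [_ [/(_ k x)]]. Qed.

Lemma isnormD x y : N (x + y) <= N x + N y.
Proof. by case: normN => _ [_ [_ /(_ x y)]]. Qed.

Lemma isnorm0 : N 0 = 0.
Proof. by rewrite -(scale0r 0) isnormZ normr0 mul0r. Qed.

Lemma isnormN x : N (- x) = N x.
Proof. by rewrite -scaleN1r isnormZ normrN normr1 mul1r. Qed.

Lemma isnorm_sum (I : Type) (r : seq I) (F : I -> 'rV[R]_d) :
  N (\sum_(i <- r) F i) <= \sum_(i <- r) N (F i).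
Proof.
elim: r => [|a r IH]; first by rewrite !big_nil isnorm0.
by rewrite !big_cons; apply: le_trans (isnormD _ _) _; rewrite lerD2l.
Qed.

Lemma isnorm_dist x y : `|N x - N y| <= N (x - y).
Proof.
have := isnormD (x - y) y; have := isnormD (y - x) x.
by rewrite !subrK -opprB isnormN ler_norml => ? ?; apply/andP; split; lra.
Qed.

Lemma mx_coord_le_norm x i : `|x 0 i| <= `|x|.
Proof.
rewrite [leRHS]/Num.norm /= mx_normrE; apply/bigmax_geP; right.
by exists (0, i).
Qed.

Lemma isnorm_le_mx_norm x : N x <= (\sum_(i < d) N (delta_mx 0 i)) * `|x|.
Proof.
rewrite {1}(row_sum_delta x); apply: le_trans (isnorm_sum _ _ _) _.
rewrite mulr_suml; apply: ler_sum => i _; rewrite isnormZ mulrC.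
by apply: ler_wpM2l; [exact: isnorm_ge0 | exact: mx_coord_le_norm].
Qed.

Lemma isnorm_continuous : continuous N.
Proof.
set C := \sum_(i < d) N (delta_mx 0 i).
have C1_gt0 : 0 < C + 1 by rewrite ltr_wpDl // sumr_ge0 // => i _; exact: isnorm_ge0.
move=> x; apply/(@cvgrPdist_lt _ _ _ _ (nbhs_filter x)) => e e_gt0.
apply/nbhs_ballP; exists (e / (C + 1)) => /=; first by rewrite divr_gt0.
move=> y; rewrite -ball_normE /= => xy_small.
apply: le_lt_trans (isnorm_dist _ _) _; apply: le_lt_trans (isnorm_le_mx_norm _) _.
apply: le_lt_trans (_ : _ <= (C + 1) * `|x - y|) _; first by rewrite ler_wpM2r ?lerDl.
by rewrite mulrC -ltr_pdivlMr.
Qed.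

(* N attains a positive minimum on the compact unit sphere of the sup norm,
   which is empty exactly when d = 0. *)
Lemma mx_norm_le_isnorm : exists2 M, 0 < M & forall x, `|x| <= M * N x.
Proof.
pose S := [set x : 'rV[R]_d | `|x| = 1].
have normalize x : x != 0 -> S (`|x|^-1 *: x).
  by move=> x0; rewrite /S /= normrZ normfV normr_id mulVf ?normr_eq0.
have [[c0 Sc0]|noS] := pselect (exists c, S c); last first.
  exists 1 => // x; have [->|/normalize Sx] := eqVneq x 0.
    by rewrite normr0 isnorm0 mulr0.
  by case: noS; exists (`|x|^-1 *: x).
have cS : compact S.
  apply: bounded_closed_compact.
    by exists 1; split; [rewrite num_real | move=> M M1 x /= ->; exact: ltW].
  rewrite (_ : S = Num.norm @^-1` [set 1]) //.
  apply: preimage_closed; last exact: closed_eq.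
  by move=> x _; exact: norm_continuous.
have [c /[1!inE] Sc cmin] :=
  compact_EVT_min (ex_intro _ c0 Sc0) cS (continuous_subspaceT isnorm_continuous).
have Nc_gt0 : 0 < N c.
  rewrite lt_def isnorm_ge0 andbT; apply/eqP => /isnorm_eq0 c0'.
  by move: Sc; rewrite /S /= c0' normr0 => /eqP; rewrite eq_sym oner_eq0.
exists (N c)^-1; first by rewrite invr_gt0.
move=> x; case: (eqVneq x 0) => [->|x0]; first by rewrite normr0 isnorm0 mulr0.
have x_gt0 : 0 < `|x| by rewrite normr_gt0.
have := cmin _ (mem_set (normalize x x0)).
by rewrite isnormZ normfV normr_id !ler_pdivlMl // mulrC.
Qed.

Lemma dual_norm_has_sup z : has_sup [set ip z x | x in [set x | N x <= 1]].
Proof.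
have [M M_gt0 normM] := mx_norm_le_isnorm.
split; first by exists 0, 0; rewrite /= ?isnorm0 ?ip0r.
exists ((\sum_(i < d) `|z 0 i|) * M) => _ [x /= Nx1 <-].
apply: le_trans (ler_norm _) _; apply: le_trans (ler_norm_sum _ _ _) _.
rewrite mulr_suml; apply: ler_sum => i _; rewrite normrM ler_wpM2l //.
apply: le_trans (mx_coord_le_norm _ _) _; apply: le_trans (normM x) _.
by rewrite ler_piMr // ltW.
Qed.

Lemma ip_le_dual_norm z v : ip z v <= N v * dual_norm N z.
Proof.
have [->|v0] := eqVneq v 0; first by rewrite ip0r isnorm0 mul0r.
have Nv_gt0 : 0 < N v.
  by rewrite lt_def isnorm_ge0 andbT; apply: contra_neq v0 => /isnorm_eq0.
have -> : ip z v = N v * ip z ((N v)^-1 *: v).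
  by rewrite ipZr mulrA mulfV ?gt_eqF // mul1r.
rewrite ler_pM2l //.
apply: sup_upper_bound; first exact: dual_norm_has_sup.
by exists ((N v)^-1 *: v) => //=; rewrite isnormZ normfV gtr0_norm // mulVf ?gt_eqF.
Qed.

End NormsOnRowVectors.

Section OneSidedDerivativeBounds.
Context {R : realType} {V : normedModType R}.

Lemma derive_le_of_quotient_le {f : V -> R} {y v : V} {b e : R} :
  derivable f y v -> 0 < e ->
  (forall s, 0 < s < e -> f (s *: v + y) - f y <= s * b) -> 'D_v f y <= b.
Proof.
move=> df e_gt0 quot_le.
have quot_cvg := cvg_dnbhs_at_right df.
rewrite /derive -(cvg_lim _ quot_cvg) //.
apply: limr_le; first by apply/cvg_ex; eexists; exact: quot_cvg.
near=> s.
have s_gt0 : 0 < s by near: s; exact: nbhs_right_gt.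
have s_lt_e : s < e by near: s; exact: nbhs_right_lt.
change (s^-1 * (f (s *: v + y) - f y) <= b).
by rewrite ler_pdivrMl // quot_le // s_gt0.
Unshelve. all: by end_near.
Qed.

Lemma derive_ge_of_quotient_ge {f : V -> R} {y v : V} {b e : R} :
  derivable f y v -> 0 < e ->
  (forall s, 0 < s < e -> s * b <= f (s *: v + y) - f y) -> b <= 'D_v f y.
Proof.
move=> df e_gt0 quot_ge; rewrite -lerN2 -deriveN //.
apply: (derive_le_of_quotient_le (derivableN df) e_gt0) => s /quot_ge.
by rewrite /= -opprD mulrN lerN2.
Qed.

End OneSidedDerivativeBounds.

Lemma le_of_vanishing_slack {R : realFieldType} {a b c : R} : 0 <= c ->
  (forall s, 0 < s < 1 -> a <= b + s * c) -> a <= b.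
Proof.
move=> c_ge0 slack; apply/ler_addgt0Pr => e e_gt0.
pose s := e / (2 * (e + c)).
have s_gt0 : 0 < s by rewrite divr_gt0 // mulr_gt0 // ltr_wpDr.
have sc_le_e : s * c <= e.
  by rewrite mulrAC ler_pdivrMr ?mulr_gt0 ?ltr_wpDr //; nra.
apply: le_trans (slack s _) _; last by rewrite lerD2l.
by rewrite s_gt0 ltr_pdivrMr ?mulr_gt0 ?ltr_wpDr // mul1r; lra.
Qed.

Lemma convex_set_segment {R : realType} {M : lmodType R} {X : set M} {y z : M} {s : R} :
  convex_set X -> X y -> X z -> 0 <= s -> s <= 1 -> X (s *: (z - y) + y).
Proof.
move=> convX Xy Xz s_ge0 s_le1.
have := convX z y (Itv01 s_ge0 s_le1) (mem_set Xz) (mem_set Xy).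
rewrite (_ : s *: (z - y) + y = s *: z + (1 - s) *: y); first by rewrite inE.
by rewrite scalerBr scalerBl scale1r addrA addrAC.
Qed.

Lemma omd_step_scaled {R : realType} {d : nat} {X : set 'rV[R]_d} {Rg : 'rV[R]_d -> R}
  {eta : R} {g p y : 'rV[R]_d} :
  0 < eta -> omd_step X Rg eta g p y -> forall z, X z ->
  eta * ip g y + bregman Rg y p <= eta * ip g z + bregman Rg z p.
Proof.
move=> eta_gt0 [_ opt] z /opt; rewrite -(ler_pM2l eta_gt0) !mulrDr.
by rewrite !(mulrCA eta _ eta^-1) mulfV ?gt_eqF // !mulr1.
Qed.

Section MirrorStep.
Context {R : realType} {d : nat} {X : set 'rV[R]_d} {Rg N : 'rV[R]_d -> R}.
Hypothesis convX : convex_set X.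
Hypothesis diffRg : forall y, X y -> differentiable Rg y.
Hypothesis scRg : strongly_convex1 N X Rg.

Lemma bregman_ge_half_sqr {a b : 'rV[R]_d} :
  X a -> X b -> N (a - b) ^+ 2 / 2 <= bregman Rg a b.
Proof.
move=> Xa Xb; set v := a - b; set c := N v ^+ 2 / 2.
have c_ge0 : 0 <= c by rewrite divr_ge0 // sqr_ge0.
rewrite /bregman ip_grad_derive -/v; last exact: diffRg.
suff : 'D_v Rg b <= Rg a - Rg b - c by lra.
apply: (le_of_vanishing_slack c_ge0) => s0 /andP[s0_gt0 s0_lt1].
apply: (derive_le_of_quotient_le (diff_derivable (diffRg _ Xb)) s0_gt0).
move=> s /andP[s_gt0 s_lt_s0].
have := scRg _ _ s Xa Xb; rewrite (ltW s_gt0) (ltW (lt_trans s_lt_s0 s0_lt1)).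
rewrite (_ : s *: a + (1 - s) *: b = s *: v + b); last first.
  by rewrite scalerBr scalerBl scale1r addrA addrAC.
have : 0 <= s * (s0 - s) * c by apply: mulr_ge0 => //; apply: mulr_ge0; lra.
rewrite /c; lra.
Qed.

Lemma bregman_ge0 {a b : 'rV[R]_d} : X a -> X b -> 0 <= bregman Rg a b.
Proof.
by move=> Xa Xb; apply: le_trans (bregman_ge_half_sqr Xa Xb); rewrite divr_ge0 // sqr_ge0.
Qed.

Lemma omd_step_three_point {eta : R} {g p y z : 'rV[R]_d} :
  0 < eta -> omd_step X Rg eta g p y -> X z ->
  eta * ip g (y - z) <= bregman Rg z p - bregman Rg z y - bregman Rg y p.
Proof.
move=> eta_gt0 step Xz; have [Xy _] := step; set v := z - y.
have first_order : ip (grad Rg p) v - eta * ip g v <= 'D_v Rg y.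
  apply: (derive_ge_of_quotient_ge (diff_derivable (diffRg _ Xy)) ltr01).
  move=> s /andP[s_gt0 s_lt1].
  have Xys := convex_set_segment convX Xy Xz (ltW s_gt0) (ltW s_lt1).
  have := omd_step_scaled eta_gt0 step _ Xys.
  by rewrite /bregman -/v -[s *: v + y - p]addrA !(ipDr _ (s *: v)) !ipZr; lra.
rewrite -ip_grad_derive in first_order; last exact: diffRg.
have split_p : ip (grad Rg p) (z - p) = ip (grad Rg p) v + ip (grad Rg p) (y - p).
  by rewrite -ipDr /v addrA subrK.
rewrite /bregman split_p -/v -[y - z]opprB ipNr; lra.
Qed.

Hypothesis normN : is_norm N.

Lemma oomd_round_bound {eta : R} {g h p y w : 'rV[R]_d} (u : 'rV[R]_d) :
  0 < eta -> X p -> omd_step X Rg eta h p y -> omd_step X Rg eta g p w -> X u ->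
  ip (y - u) g <=
    (bregman Rg u p - bregman Rg u w) / eta + eta / 2 * dual_norm N (g - h) ^+ 2.
Proof.
move=> eta_gt0 Xp step_y step_w Xu; have [Xy _] := step_y; have [Xw _] := step_w.
have three_point_w := omd_step_three_point eta_gt0 step_w Xu.
have three_point_y := omd_step_three_point eta_gt0 step_y Xw.
have Dwy := bregman_ge_half_sqr Xw Xy.
have Dyp := bregman_ge0 Xy Xp.
set n := N (y - w); set sd := dual_norm N (g - h).
have amgm : eta * ip (g - h) (y - w) <= n ^+ 2 / 2 + eta ^+ 2 / 2 * sd ^+ 2.
  have := ip_le_dual_norm normN (g - h) (y - w); rewrite -/n -/sd => holder.
  have := sqr_ge0 (n - eta * sd); nra.
have split_ip : ip (y - u) g = ip g (w - u) + ip (g - h) (y - w) + ip h (y - w).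
  by rewrite ipC ipBl -addrA subrK -ipDr [w - u + _]addrC addrA subrK.
rewrite -[w - y]opprB isnormN // -/n in Dwy.
rewrite split_ip -lerBlDr ler_pdivlMr //; lra.
Qed.

End MirrorStep.

Lemma sum_by_parts {R : comRingType} (q D : nat -> R) n :
  \sum_(1 <= t < n.+1) q t * (D t.-1 - D t) =
  q 1%N * D 0%N + \sum_(1 <= t < n.+1) (q t.+1 - q t) * D t - q n.+1 * D n.
Proof.
elim: n => [|n IH]; first by rewrite !big_geq //; ring.
by rewrite big_nat_recr // IH [in RHS]big_nat_recr //=; ring.
Qed.

Lemma oomd_iterates_in {R : realType} {d : nat} {X : set 'rV[R]_d} {Rg : 'rV[R]_d -> R}
  {eta : R} {T : nat} {l x xt : nat -> 'rV[R]_d} :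
  is_OOMD X Rg eta T l x xt -> forall t, (t <= T)%N -> X (xt t).
Proof.
move=> [[Xxt0 _] steps] [|t] // t_le_T.
by have [_ []] := steps t.+1 t_le_T.
Qed.

Theorem lemma3 (R : realType) (d : nat) (X : set 'rV[R]_d)
  (N : 'rV[R]_d -> R) (Rg : 'rV[R]_d -> R) (eta : R) (T : nat)
  (l : nat -> 'rV[R]_d) (x xt : nat -> 'rV[R]_d) (xs : 'rV[R]_d) (q : nat -> R) :
  X `<=` @simplex R d ->
  convex_set X ->
  (forall t, (1 <= t <= T)%N -> forall i, 0 <= l t 0 i <= 1) ->
  is_norm N ->
  (forall y, X y -> differentiable Rg y) ->
  strongly_convex1 N X Rg ->
  0 < eta ->
  is_OOMD X Rg eta T l x xt ->
  X xs ->
  (forall t, (1 <= t <= T.+1)%N -> 0 <= q t) ->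
  \sum_(1 <= t < T.+1) q t * ip (x t - xs) (l t) <=
    q 1%N * bregman Rg xs (xt 0%N) / eta
    + 1 / eta * \sum_(1 <= t < T.+1) (q t.+1 - q t) * bregman Rg xs (xt t)
    + eta / 2 * \sum_(1 <= t < T.+1) q t * dual_norm N (l t - ltilde l t) ^+ 2.
Proof.
move=> _ convX _ normN diffRg scRg eta_gt0 oomd Xxs q_ge0.
have Xxt := oomd_iterates_in oomd; have [_ steps] := oomd.
pose D t := bregman Rg xs (xt t).
pose sd t := dual_norm N (l t - ltilde l t).
have round t : (1 <= t < T.+1)%N -> q t * ip (x t - xs) (l t) <=
    1 / eta * (q t * (D t.-1 - D t)) + eta / 2 * (q t * sd t ^+ 2).
  move=> /[dup] t_range /andP[t_ge1 t_le_T]; have [step_x step_xt] := steps t t_range.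
  have Xp : X (xt t.-1) by apply: Xxt; rewrite (leq_trans (leq_pred t)).
  have qt_ge0 : 0 <= q t by rewrite q_ge0 // t_ge1 ltnW.
  have := oomd_round_bound convX diffRg scRg normN xs eta_gt0 Xp step_x step_xt Xxs.
  move=> /(ler_wpM2l qt_ge0) /le_trans; apply.
  by rewrite /D /sd; lra.
apply: le_trans (ler_sum_nat round) _.
rewrite big_split /= -!mulr_sumr sum_by_parts.
have qT_ge0 : 0 <= q T.+1 by rewrite q_ge0 // leqnn.
have DT_ge0 : 0 <= D T := bregman_ge0 diffRg scRg Xxs (Xxt T (leqnn T)).
have : 0 <= q T.+1 * D T / eta by apply: divr_ge0; [exact: mulr_ge0 | exact: ltW].
rewrite /D /sd; lra.
Qed.
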